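(* Let $K$ be a finite triangulation of a 2-stratifold $X(\mathcal{M},\mathcal{C})$ and run the algorithm described below on $K$. Then each graph $G_{i,j}$ constructed in step (1.1.4) for the polygon $P_{i,j}$ is a tree.
   Context: A (finite) 2-stratifold $X=X(\mathcal{M},\mathcal{C})$ is a compact connected Hausdorff space obtained from a finite collection $\mathcal{C}$ of circles and a finite collection $\mathcal{M}=\{\mathbb{M}_1,\dots,\mathbb{M}_n\}$ of compact connected surfaces with boundary by attaching each boundary component of each $\mathbb{M}_i$ to exactly one circle via a covering map $\mathbb{S}^1\to\mathbb{S}^1$, where for each circle the sum of the absolute values of the degrees of the maps attached to it exceeds $2$. Let $\rho:\bigsqcup_i\mathbb{M}_i\to X$ be the quotient map; any triangulation $K$ of $X$ contains the circles in its 1-skeleton and is obtained by triangulating each $\mathbb{M}_i$ as a polygon with identified sides and identifying boundaries; $K_i$ denotes the subcomplex $\rho(\mathbb{M}_i)$. A vertex is a boundary vertex if it lies in $\rho(\partial\mathbb{M}_i)$ for some $i$, and internal otherwise. An edge is a boundary edge if it lies in some $\rho(\partial\mathbb{M}_i)$; a crossing edge if both endpoints are boundary vertices but it is not a boundary edge; a bridge edge if it joins an internal vertex to a boundary vertex; an internal edge if both endpoints are internal. The crossing edges subdivide the polygon of $K_i$ into sub-polygons $P_{i,1},\dots,P_{i,r_i}$ with no crossing edges in their interiors. Algorithm: (1) For each $i$: (1.1) for each $j\le r_i$: (1.1.1) let $H_{i,j}$ be the graph formed by the internal vertices and internal edges of $P_{i,j}$ together with one boundary vertex $b_{i,j}$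 of $P_{i,j}$ and one bridge edge joining it to them; (1.1.2) choose a spanning tree $S_{i,j}$ of $H_{i,j}$; (1.1.3) let $V_{i,j}$ be the set of pairs $(w,e)$ with $e$ an edge of $S_{i,j}$ and $w$ the endpoint of $e$ farther from $b_{i,j}$ in $S_{i,j}$; (1.1.4) let $G_{i,j}$ be the graph whose vertices are the 2-simplices of $P_{i,j}$, with one edge joining two 2-simplices for each edge of $K$ they share that is not on the boundary of $P_{i,j}$ (not a boundary or crossing edge) and is not an edge of $S_{i,j}$. (1.2) Let $T_i$ be obtained from $G_{i,1}\sqcup\dots\sqcup G_{i,r_i}$ by adding, for each crossing edge of $K_i$, an edge joining the two 2-simplices containing it. (1.3) Choose a 2-simplex $F_{i,0}$ of $K_i$ and let $V_{T_i}$ be the set of pairs $(e,F(e))$, where $e$ runs over the edges of $K$ corresponding to edges of $T_i$ and $F(e)$ is the endpoint of that edge of $T_i$ farther from $F_{i,0}$ in $T_i$. (2) Let $B$ be the graph of all boundary vertices and boundary edges of $K$; choose a spanning tree and a root, and let $V_B$ be the set of pairs $(w,e)$ with $e$ in the spanning tree and $w$ the endpoint of $e$ farther from the root. (3) Output $V=V_B\cup\bigcup_i V_{T_i}\cup\bigcup_{i,j}V_{i,j}$. *)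

From mathcomp Require Import all_boot.
Set Implicit Arguments. Unset Strict Implicit. Unset Printing Implicit Defensive.

Section Graphs.
Variable T : finType.

Definition restr (A : {set T}) (r : rel T) : rel T :=
  fun x y => [&& x \in A, y \in A & r x y].

Definition connectedb (A : {set T}) (r : rel T) : bool :=
  [forall x in A, forall y in A, connect (restr A r) x y].

Definition has_cycle (A : {set T}) (r : rel T) : Prop :=
  exists s : seq T, [/\ uniq s, 3 <= size s, all (mem A) s & cycle r s].

Definition is_tree (A : {set T}) (r : rel T) : Prop :=
  [/\ A != set0, connectedb A r & ~ has_cycle A r].

Definition eadj (E : {set {set T}}) : rel T :=
  fun x y => (x != y) && ([set x; y] \in E).
End Graphs.

Section Polygon.
Variable V : finType.
Variable F : {set {set V}}.   (* the 2-simplices *)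

Definition edges : {set {set V}} :=
  [set e : {set V} | (#|e| == 2) && [exists t in F, e \subset t]].

Definition edeg (e : {set V}) : nat := #|[set t in F | e \subset t]|.

Definition bedge (e : {set V}) : bool := (e \in edges) && (edeg e == 1).
Definition iedge (e : {set V}) : bool := (e \in edges) && (edeg e == 2).

Definition bvert (v : V) : bool := [exists e, bedge e && (v \in e)].
Definition ivert (v : V) : bool := ~~ bvert v.

Definition link_verts (v : V) : {set V} :=
  [set u | (u != v) && ([set v; u] \in edges)].
Definition link_adj (v : V) : rel V :=
  fun u w => (u != w) && ([set v; u; w] \in F).

Definition dual_adj : rel {set V} :=
  fun t1 t2 => (t1 != t2) && (#|t1 :&: t2| == 2).

(* F is a (simplicial) triangulation of a polygon, i.e. of a closed 2-disk:
   a connected combinatorial surface (every edge in one or two triangles,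
   every vertex link connected, hence a path or a cycle) with nonempty
   boundary and Euler characteristic 1.  By the classification of compact
   surfaces these are exactly the triangulated disks. *)
Definition triangulated_polygon : Prop :=
  [/\ forall t, t \in F -> #|t| == 3,
      forall v : V, exists2 t, t \in F & v \in t,
      forall e, e \in edges -> (edeg e == 1) || (edeg e == 2),
      forall v, connectedb (link_verts v) (link_adj v)
    & [/\ connectedb F dual_adj,
           exists e, bedge e
         & #|V| + #|F| = #|edges| + 1]].

Definition no_interior_crossing : Prop :=
  forall e, iedge e -> [exists v in e, ivert v].

Definition internal_edge (e : {set V}) : bool :=
  (e \in edges) && [forall v in e, ivert v].
Definition bridge_edge (e : {set V}) : bool :=
  [&& e \in edges, [exists v in e, ivert v] & [exists v in e, bvert v]].

(* the graph H_{i,j} of step (1.1.1), for the chosen boundary vertex b and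
   chosen bridge edge e0 (e0 is only used when there are internal vertices) *)
Definition H_verts (b : V) : {set V} := b |: [set v | ivert v].
Definition H_edges (e0 : {set V}) : {set {set V}} :=
  [set e | internal_edge e || ((e == e0) && bridge_edge e0)].

(* the graph G_{i,j} of step (1.1.4): vertices the 2-simplices of F, two of
   them adjacent when they share an edge (necessarily not on the boundary of
   the polygon) which is not an edge of S *)
Definition G_adj (S : {set {set V}}) : rel {set V} :=
  fun t1 t2 => dual_adj t1 t2 && (t1 :&: t2 \notin S).
End Polygon.

From mathcomp Require Import all_boot zify.
Set Implicit Arguments. Unset Strict Implicit. Unset Printing Implicit Defensive.

(* The graph G of triangles adjacent across an edge outside S is connected: if a
   G-component X were proper, some interior edge would have exactly one of its two
   triangles in X, and every such edge lies in S.  These edges form a nonempty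
   subforest of the tree S, which has a leaf z other than b; z is an interior
   vertex, so the edges at z with exactly one triangle in X are exactly the forest
   edges at z, of which there is one.  But counting over the triangles of X around z
   shows that their number is even.
   Moreover G has at most |F| - 1 edges: they correspond to interior edges outside
   S, and Euler's relation |V| + |F| = |E| + 1, together with
   #boundary vertices <= #boundary edges (every boundary vertex lies on at least two
   boundary edges, again by parity) and |S| >= #interior vertices (S spans the
   interior vertices and b), bounds their number by |F| - 1.  A connected graph on
   F with at most |F| - 1 edges is a tree. *)

Lemma eq_set2 (T : finType) (x y x' y' : T) : x != y ->
  [set x; y] = [set x'; y'] -> (x = x' /\ y = y') \/ (x = y' /\ y = x').
Proof.
move=> xy /setP eq_xy; move: (esym (eq_xy y)) (esym (eq_xy x)); rewrite !inE !eqxx orbT /=.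
case/orP=> /eqP y_eq; case/orP=> /eqP x_eq; subst; rewrite ?eqxx in xy; by [left | right].
Qed.

Section Graph.
Variables (T : finType) (A : {set T}) (r : rel T).

Definition edge_set : {set {set T}} := [set [set x; y] | x in A, y in A & r x y].

Lemma edge_set_mem x y : x \in A -> y \in A -> r x y -> [set x; y] \in edge_set.
Proof. by move=> xA yA rxy; apply/imset2P; exists x y; rewrite ?inE ?yA. Qed.

Lemma connected_parent x0 : x0 \in A -> connectedb A r ->
  exists (p : T -> T) (d : T -> nat), forall v, v \in A -> v != x0 ->
    [/\ p v \in A, r (p v) v & d (p v) < d v].
Proof.
move=> x0A /forall_inP /(_ x0 x0A) /forall_inP conn.
pose reach v n := [exists s : n.-tuple T, path (restr A r) x0 s && (last x0 s == v)].
have reach_ex v : exists n, (v \in A) ==> reach v n.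
  case vA: (v \in A); last by exists 0.
  have /connectP [s ps ->] := conn v vA.
  by exists (size s); apply/existsP; exists (in_tuple s); rewrite /= ps eqxx.
pose d v := ex_minn (reach_ex v).
have d_min v n : v \in A -> reach v n -> d v <= n.
  by move=> vA; rewrite /d; case: ex_minnP => m _ /(_ n); rewrite vA; apply.
have d_reach v : v \in A -> reach v (d v).
  by move=> vA; rewrite /d; case: ex_minnP => m; rewrite vA.
exists (fun v => odflt x0 [pick u | [&& u \in A, r u v & d u < d v]]), d.
move=> v vA vx0; case: pickP => [u /and3P [-> -> ->] // | no_parent].
have /existsP [s /andP [ps /eqP ls]] := d_reach v vA.
have ds : size s = d v by rewrite size_tuple.
move: ps ls ds; case/lastP: (tval s) => [_ /= v_x0 | s' w].
  by rewrite v_x0 eqxx in vx0.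
rewrite rcons_path last_rcons size_rcons => /andP [ps' /and3P [uA _ ruv]] wv dv.
subst w.
have reach_u : reach (last x0 s') (size s').
  by apply/existsP; exists (in_tuple s'); rewrite /= ps' eqxx.
by have := no_parent (last x0 s'); rewrite /= uA ruv -dv ltnS (d_min _ _ uA reach_u).
Qed.

Lemma parent_edges_card x0 (p : T -> T) (d : T -> nat) : x0 \in A ->
  {in A :\ x0, forall v, d (p v) < d v} ->
  #|[set [set p v; v] | v in A :\ x0]| = #|A| - 1.
Proof.
move=> x0A dp; rewrite card_in_imset ?(cardsD1 x0 A) ?x0A ?add1n ?subn1 //.
move=> v w vA wA /= vw_eq; apply/eqP/negPn/negP => vw.
have : v \in [set p w; w] by rewrite -vw_eq set22.
have : w \in [set p v; v] by rewrite vw_eq set22.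
rewrite !inE (eq_sym w v) (negbTE vw) !orbF => /eqP wp /eqP vp.
have := dp v vA; have := dp w wA; rewrite -wp -vp => dvw dwv.
by have := ltn_trans dvw dwv; rewrite ltnn.
Qed.

Lemma connected_card_edge_set : connectedb A r -> #|A| - 1 <= #|edge_set|.
Proof.
move=> conn; have [-> | /set0Pn [x0 x0A]] := eqVneq A set0; first by rewrite cards0.
have [p [d pd]] := connected_parent x0A conn.
have dp : {in A :\ x0, forall v, d (p v) < d v}.
  by move=> v /setD1P [vx0 vA]; case: (pd v vA vx0).
rewrite -(parent_edges_card x0A dp); apply/subset_leq_card/subsetP => f.
case/imsetP=> v /setD1P [vx0 vA] ->; have [pA rpv _] := pd v vA vx0.
exact: edge_set_mem.
Qed.

Lemma cycle_two_neighbours (s : seq T) v : uniq s -> 3 <= size s -> cycle r s ->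
  v \in s -> exists a c, [/\ uniq [:: c; v; a], c \in s, a \in s, r c v & r v a].
Proof.
move=> us s3 cs vs; have := rot_index vs.
set q := _ ++ _ => rot_s; have := size_rot (index v s) s.
move: (rot_uniq (index v s) s) (rot_cycle (index v s) r s) (mem_rot (index v s) s).
rewrite rot_s us cs => uq cq mq; case: q rot_s uq cq mq => [|a [|c q]] _ uq cq mq sq;
  try by rewrite -sq in s3.
move: cq; rewrite /= rcons_path => /and4P [rva _ _ rcv].
have lq : last c q \in c :: q := mem_last c q.
exists a, (last c q); split=> //.
- move: uq; rewrite (cons_uniq v) (cons_uniq a) in_cons => /and3P [/norP [va vcq] aq _].
  rewrite /= !inE negb_or va !andbT.
  by apply/andP; split; [apply: (contraNneq _ vcq) | apply: (contraNneq _ aq)] => <-.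
- by rewrite -mq 2!in_cons lq !orbT.
- by rewrite -mq in_cons mem_head orbT.
Qed.

Lemma connected_acyclic : connectedb A r -> #|edge_set| <= #|A| - 1 -> ~ has_cycle A r.
Proof.
move=> conn small [s [us s3 sA cs]].
have [x0 x0s] : exists x0, x0 \in s.
  by case: s s3 {us sA cs} => // x0 s _; exists x0; rewrite inE eqxx.
have x0A : x0 \in A := allP sA x0 x0s.
have [p [d pd]] := connected_parent x0A conn.
have dp : {in A :\ x0, forall v, d (p v) < d v}.
  by move=> v /setD1P [vx0 vA]; case: (pd v vA vx0).
have parent_edges : edge_set = [set [set p v; v] | v in A :\ x0].
  apply/esym/eqP; rewrite eqEcard (parent_edges_card x0A dp) small andbT.
  apply/subsetP => f /imsetP [v /setD1P [vx0 vA] ->]; have [pA rpv _] := pd v vA vx0.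
  exact: edge_set_mem.
have [v vs vmax] := @arg_maxnP _ x0 (mem s) d x0s.
have vA : v \in A := allP sA v vs.
have to_parent w : w \in s -> v != w -> [set v; w] \in edge_set -> w = p v.
  rewrite parent_edges => ws vw /imsetP [u uAc /(eq_set2 vw) [[v_pu w_u] | [-> ->]] //].
  by have := vmax w ws; rewrite /= w_u v_pu leqNgt dp.
have edge_in w : w \in s -> r v w || r w v -> [set v; w] \in edge_set.
  move=> ws /orP [] ?; [| rewrite setUC]; apply: edge_set_mem => //; exact: allP sA w ws.
have [a [c [/and3P [cva va _] cs' as' rcv rva]]] := cycle_two_neighbours us s3 cs vs.
move: cva va; rewrite !inE negb_or eq_sym => /andP [vc ca] va.
have a_p : a = p v by apply: to_parent => //; apply: edge_in; rewrite ?rva.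
have c_p : c = p v by apply: to_parent => //; apply: edge_in; rewrite ?rcv ?orbT.
by rewrite a_p c_p eqxx in ca.
Qed.

Lemma connected_cut (X : {set T}) x y :
  connectedb A r -> X \subset A -> x \in X -> y \in A :\: X ->
  exists t1 t2, [/\ t1 \in X, t2 \in A :\: X & r t1 t2].
Proof.
move=> /forall_inP conn XA xX /setDP [yA yX].
have /forall_inP /(_ y yA) /connectP [s] := conn x (subsetP XA x xX).
elim: s x xX => [|t s IH] x xX /=; first by move=> _ yx; rewrite yx xX in yX.
case/andP=> /and3P [_ tA rxt] ps ly; have [tX | tX] := boolP (t \in X).
  exact: IH ps ly.
by exists x, t; rewrite inE tX tA.
Qed.

End Graph.

Lemma eadj_sym (T : finType) (D : {set {set T}}) : symmetric (eadj D).
Proof. by move=> x y; rewrite /eadj eq_sym setUC. Qed.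

Lemma eadj_subset (T : finType) (D E : {set {set T}}) : D \subset E -> subrel (eadj D) (eadj E).
Proof. by move=> DE x y /andP [xy /(subsetP DE) xyE]; rewrite /eadj xy xyE. Qed.

Lemma has_cycle_subrel (T : finType) (A : {set T}) (r r' : rel T) :
  subrel r r' -> has_cycle A r -> has_cycle A r'.
Proof. by move=> rr' [s [us s3 sA cs]]; exists s; split=> //; apply: sub_cycle cs. Qed.

Lemma edge_set_eadj (T : finType) (A : {set T}) (E : {set {set T}}) :
  edge_set A (eadj E) \subset E.
Proof. by apply/subsetP => f /imset2P [x y _]; rewrite inE => /andP [_ /andP [_ xyE]] ->. Qed.

Section Forest.
Variables (T : finType) (A : {set T}) (D : {set {set T}}).
Hypothesis D_sub : {in D, forall e : {set T}, e \subset A}.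
Hypothesis D_acyclic : ~ has_cycle A (eadj D).

Lemma eadj_mem x y : eadj D x y -> x \in A.
Proof. by case/andP=> _ /D_sub /subsetP; apply; rewrite set21. Qed.

Lemma longest_path_leaf x y s :
  uniq [:: x, y & s] -> path (eadj D) x (y :: s) ->
  (forall s', uniq s' -> sorted (eadj D) s' -> size s' <= (size s).+2) ->
  [set u | eadj D x u] = [set y].
Proof.
move=> us pxs s_max; apply/setP => u; rewrite !inE.
have [-> | uy] := eqVneq u y; first by case/andP: pxs.
apply/negbTE/negP => xu; have [us' | uns] := boolP (u \in s).
- case/splitPr: us' pxs us => p1 p2 + us; rewrite /= cat_path => /and3P [xy py1 /andP [yu _]].
  have cyc : cycle (eadj D) [:: x, y & rcons p1 u].
    by rewrite /= !rcons_path last_rcons xy py1 yu eadj_sym xu.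
  apply: D_acyclic; exists [:: x, y & rcons p1 u]; split.
  + by apply: (subseq_uniq _ us); rewrite -cat_rcons -!cat_cons prefix_subseq.
  + by rewrite /= size_rcons.
  + by apply/allP => z /(next_cycle cyc) /eadj_mem.
  + exact: cyc.
- suff : size [:: u, x, y & s] <= (size s).+2 by rewrite ltnn.
  apply: s_max; last by rewrite /= eadj_sym xu.
  rewrite (cons_uniq u) us !inE !negb_or (negbTE uy) uns eq_sym.
  by rewrite (andP xu).1.
Qed.

Lemma forest_leaf b : (exists x y, eadj D x y) ->
  exists2 z, z != b & #|[set u | eadj D z u]| = 1.
Proof.
case=> x0 [y0 xy0].
pose long n := [exists s : n.-tuple T, uniq s && sorted (eadj D) s].
have long2 : long 2.
  by apply/existsP; exists [tuple x0; y0]; rewrite /= inE xy0 (andP xy0).1.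
have long_bound n : long n -> n <= #|T|.
  by case/existsP=> s /andP [us _]; rewrite -(size_tuple s) -(card_uniqP us) max_card.
have [n /existsP [[s /= size_s] /andP [us ss]] n_max] :=
  ex_maxnP (ex_intro _ 2 long2) long_bound.
move/eqP: size_s => sn.
have leaf x y t : size [:: x, y & t] = size s -> uniq [:: x, y & t] ->
    path (eadj D) x (y :: t) -> #|[set u | eadj D x u]| = 1.
  move=> size_s uxt pxt; rewrite (longest_path_leaf uxt pxt) ?cards1 // => s' us' ss'.
  rewrite [(size t).+2]size_s sn; apply: n_max.
  by apply/existsP; exists (in_tuple s'); rewrite /= us' ss'.
have n2 : 1 < size s by rewrite sn; apply: n_max.
case Es: s us ss n2 => [|x [|y t]] // us ss _.
have leaf_x : #|[set u | eadj D x u]| = 1 by apply: leaf us ss; rewrite Es.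
case Er: (rev s) => [|x' [|y' t']]; try by have := size_rev s; rewrite Er Es.
have us' : uniq [:: x', y' & t'] by rewrite -Er rev_uniq Es.
have ss' : sorted (eadj D) [:: x', y' & t'].
  by rewrite -Er rev_sorted Es (@eq_sorted _ _ (eadj D)) // => ? ?; apply: eadj_sym.
have leaf_x' : #|[set u | eadj D x' u]| = 1.
  by apply: leaf us' ss'; rewrite -Er size_rev.
have x_last : last x' (y' :: t') = x.
  by move: (last_rcons x' (rev (y :: t)) x); rewrite -rev_cons -Es Er.
have xx' : x != x'.
  by apply: (contraNneq _ (andP us').1) => <-; rewrite -x_last; exact: (mem_last y' t').
by have [xb | xb] := eqVneq x b; [exists x'; rewrite // -xb eq_sym | exists x].
Qed.

End Forest.

Lemma odd_card_eq1 (T : finType) (P : pred T) (f : T -> nat) :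
  (forall u, P u -> f u <= 2) ->
  odd #|[set u | P u && (f u == 1)]| = odd (\sum_(u | P u) f u).
Proof.
move=> f_le2; rewrite -sum1dep_card big_mkcondr /=.
rewrite [in RHS](eq_bigr (fun u => (f u == 1) + 2 * (f u == 2))) => [|u /f_le2]; last first.
  by case: (f u) => [|[|[|]]].
by rewrite big_split -big_distrr /= oddD mul2n odd_double addbF.
Qed.

Lemma sum_card_incident (T : finType) (P : pred {set T}) :
  \sum_x #|[set e | P e & x \in e]| = \sum_(e | P e) #|e|.
Proof.
under eq_bigr => x _ do rewrite -sum1dep_card big_mkcondr /=.
rewrite exchange_big; apply: eq_bigr => e _.
by rewrite -sum1_card [RHS]big_mkcond.
Qed.

Lemma sum_edeg_star (V : finType) (X : {set {set V}}) v :
  {in X, forall t : {set V}, #|t| = 3} ->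
  \sum_(u | u != v) edeg X [set v; u] = 2 * #|[set t in X | v \in t]|.
Proof.
move=> X3; under eq_bigr => u _ do rewrite /edeg -sum1dep_card big_mkcondr /=.
rewrite exchange_big /= -sum1dep_card big_distrr [RHS]big_mkcondr /=.
apply: eq_bigr => t tX; under eq_bigr => u _ do rewrite subUset !sub1set.
have [vt | vt] := boolP (v \in t); last by rewrite big1.
have tv2 : #|t :\ v| = 2 by move: (cardsD1 v t); rewrite vt X3 // add1n => -[].
rewrite muln1 -tv2 -big_mkcondr sum1dep_card; apply: eq_card => u.
by rewrite !inE.
Qed.

Lemma card2_set2 (T : finType) (e : {set T}) v : #|e| = 2 -> v \in e ->
  exists2 u, u != v & e = [set v; u].
Proof.
move/eqP/cards2P => [x [y [xy ->]]]; rewrite !inE => /orP [] /eqP ->.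
  by exists y; rewrite // eq_sym.
by exists x; rewrite // setUC.
Qed.

Section Polygon.
Variables (V : finType) (F : {set {set V}}).
Hypothesis F3 : {in F, forall t : {set V}, #|t| = 3}.
Hypothesis edeg12 : {in edges F, forall e, (edeg F e == 1) || (edeg F e == 2)}.

Lemma edge_in_triangle (e t : {set V}) : t \in F -> e \subset t -> #|e| = 2 -> e \in edges F.
Proof. by move=> tF et e2; rewrite inE e2 eqxx; apply/exists_inP; exists t. Qed.

Lemma edeg_le2 (e : {set V}) : #|e| = 2 -> edeg F e <= 2.
Proof.
move=> e2; have [-> // | /card_gt0P [t]] := posnP (edeg F e).
by rewrite inE => /andP [tF et]; case/orP: (edeg12 (edge_in_triangle tF et e2)) => /eqP ->.
Qed.

Lemma edeg_subset (X : {set {set V}}) (e : {set V}) : X \subset F -> edeg X e <= edeg F e.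
Proof.
move=> XF; apply: subset_leq_card; apply/subsetP => t.
by rewrite !inE => /andP [/(subsetP XF) -> ->].
Qed.

Lemma even_card_edeg1 (X : {set {set V}}) v : X \subset F ->
  ~~ odd #|[set u | (u != v) && (edeg X [set v; u] == 1)]|.
Proof.
move=> XF; rewrite odd_card_eq1 => [|u uv]; last first.
  by apply: (leq_trans (edeg_subset _ XF)); apply: edeg_le2; rewrite cards2 eq_sym uv.
by rewrite sum_edeg_star ?mul2n ?odd_double // => t /(subsetP XF) /F3.
Qed.

Lemma bvert_card_bedge v : bvert F v -> 2 <= #|[set e | bedge F e & v \in e]|.
Proof.
case/existsP=> e0 /andP [be0 ve0].
set N := [set u | (u != v) && (edeg F [set v; u] == 1)].
have N_bedge : [set [set v; u] | u in N] \subset [set e | bedge F e & v \in e].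
  apply/subsetP => f /imsetP [u]; rewrite /N inE => /andP [uv /eqP d1] ->.
  rewrite inE set21 andbT /bedge d1 eqxx andbT.
  have /card_gt0P [t] : 0 < edeg F [set v; u] by rewrite d1.
  rewrite inE => /andP [tF vut].
  by apply: (edge_in_triangle tF vut); rewrite cards2 eq_sym uv.
have N_inj : {in N &, injective (fun u => [set v; u])}.
  move=> u u'; rewrite /N inE => /andP [uv _] _ /= /(eq_set2 _).
  by rewrite eq_sym uv => /(_ isT) [[_ ->] // | [vu' uv']]; rewrite uv' eqxx in uv.
have N_gt0 : 0 < #|N|.
  have /andP [/setIdP [/eqP e2 _] /eqP d1] := be0.
  have [u uv e0_vu] := card2_set2 e2 ve0.
  by apply/card_gt0P; exists u; rewrite inE uv -e0_vu d1 eqxx.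
apply: leq_trans (subset_leq_card N_bedge); rewrite card_in_imset //.
by move: (even_card_edeg1 v (subxx F)) N_gt0; rewrite -/N; case: #|N| => [|[|]].
Qed.

Lemma card_bvert_le : #|[set v | bvert F v]| <= #|[set e | bedge F e]|.
Proof.
rewrite -(leq_pmul2r (isT : 0 < 2)) -!sum_nat_cond_const.
have -> : \sum_(e | bedge F e) 2 = \sum_x #|[set e | bedge F e & x \in e]|.
  rewrite sum_card_incident; apply: eq_bigr => e /andP [/setIdP [/eqP -> _] _] //.
rewrite [X in _ <= X](bigID (bvert F)) /=; apply: leq_trans (leq_addr _ _).
exact: leq_sum bvert_card_bedge.
Qed.

Lemma iedge_of_ivert (e : {set V}) v : e \in edges F -> v \in e -> ivert F v -> iedge F e.
Proof.
move=> eE ve; apply: contraNT; rewrite /iedge eE /= => d_ne2.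
apply/existsP; exists e; rewrite /bedge eE ve andbT.
by case/orP: (edeg12 eE) d_ne2 => /eqP ->.
Qed.

Lemma dual_adj_iedge t1 t2 : t1 \in F -> t2 \in F -> dual_adj t1 t2 ->
  iedge F (t1 :&: t2) /\ [set t in F | t1 :&: t2 \subset t] = [set t1; t2].
Proof.
move=> t1F t2F /andP [t12 /eqP I2].
have sub : [set t1; t2] \subset [set t in F | t1 :&: t2 \subset t].
  by apply/subsetP => t; rewrite !inE => /orP [] /eqP ->; rewrite ?t1F ?t2F ?subsetIl ?subsetIr.
have triangles : [set t in F | t1 :&: t2 \subset t] = [set t1; t2].
  by apply/esym/eqP; rewrite eqEcard sub cards2 t12; apply: edeg_le2.
split=> //; rewrite /iedge /edeg triangles cards2 t12 andbT.
exact: edge_in_triangle t1F (subsetIl _ _) I2.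
Qed.

Lemma iedge_dual_adj e : iedge F e ->
  exists t1 t2, [/\ t1 \in F, t2 \in F, dual_adj t1 t2 & t1 :&: t2 = e].
Proof.
case/andP=> eE /cards2P [t1 [t2 [t12 triangles]]].
have : t1 \in [set t in F | e \subset t] by rewrite triangles set21.
have : t2 \in [set t in F | e \subset t] by rewrite triangles set22.
rewrite !inE => /andP [t2F et2] /andP [t1F et1].
have /setIdP [/eqP e2 _] := eE.
have I_e : t1 :&: t2 = e.
  apply/eqP; rewrite eq_sym eqEcard subsetI et1 et2 e2 /= leqNgt; apply: contra t12 => I3.
  have I_eq t : t \in F -> t1 :&: t2 \subset t -> t1 :&: t2 = t.
    by move=> tF It; apply/eqP; rewrite eqEcard It F3.
  by rewrite -(I_eq t1 t1F (subsetIl _ _)) -[X in _ == X](I_eq t2 t2F (subsetIr _ _)).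
by exists t1, t2; rewrite /dual_adj t12 I_e e2.
Qed.

Lemma H_edges_iedge b e0 e : bvert F b ->
  ((exists v, ivert F v) -> bridge_edge F e0 /\ b \in e0) ->
  e \in H_edges F e0 -> iedge F e /\ e \subset H_verts F b.
Proof.
move=> bb he0; rewrite inE => /orP [/andP [eE /forall_inP e_int] | /andP [/eqP -> be0]].
  have /setIdP [/eqP e2 _] := eE; have [v ve] : exists v, v \in e.
    by apply/set0Pn; rewrite -card_gt0 e2.
  split; first exact: iedge_of_ivert eE ve (e_int v ve).
  by apply/subsetP => w we; rewrite !inE e_int ?orbT.
have /and3P [e0E /exists_inP [w we0 iw] _] := be0.
have [_ be0'] := he0 (ex_intro _ w iw).
split; first exact: iedge_of_ivert e0E we0 iw.
have /setIdP [/eqP e2 _] := e0E; have [u ub e0_bu] := card2_set2 e2 be0'.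
have wb : w != b by apply: contraTneq iw => ->; rewrite /ivert bb.
move: we0; rewrite e0_bu !inE (negbTE wb) => /eqP <-.
by apply/subsetP => x; rewrite !inE => /orP [-> // | /eqP ->]; rewrite iw orbT.
Qed.

Lemma card_edges_split : #|edges F| = #|[set e | bedge F e]| + #|[set e | iedge F e]|.
Proof.
rewrite -(cardsID [set e | edeg F e == 1] (edges F)); congr (_ + _); apply: eq_card => e.
  by rewrite /bedge !inE.
rewrite in_setD [RHS]inE /iedge andbC inE; case eE: (e \in edges F) => //=.
by case/orP: (edeg12 eE) => /eqP ->.
Qed.

Lemma card_verts_split : #|V| = #|[set v | bvert F v]| + #|[set v | ivert F v]|.
Proof.
rewrite -(cardsC [set v | bvert F v]); congr (_ + _).
by apply: eq_card => v; rewrite !inE.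
Qed.

Hypothesis euler : #|V| + #|F| = #|edges F| + 1.

Lemma card_iedge_le : #|[set e | iedge F e]| <= #|[set v | ivert F v]| + #|F| - 1.
Proof.
by move: euler card_bvert_le; rewrite card_edges_split card_verts_split; lia.
Qed.

End Polygon.

Lemma G_adj_sym (V : finType) (S : {set {set V}}) : symmetric (G_adj S).
Proof. by move=> t1 t2; rewrite /G_adj /dual_adj eq_sym setIC. Qed.

Section Spanning.
Variables (V : finType) (F : {set {set V}}) (b : V) (S : {set {set V}}).
Hypothesis F3 : {in F, forall t : {set V}, #|t| = 3}.
Hypothesis edeg12 : {in edges F, forall e, (edeg F e == 1) || (edeg F e == 2)}.
Hypothesis S_sub : {in S, forall e : {set V}, e \subset H_verts F b}.
Hypothesis S_acyclic : ~ has_cycle (H_verts F b) (eadj S).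

Definition G_closed (X : {set {set V}}) :=
  forall t1 t2, t1 \in X -> t2 \in F -> G_adj S t1 t2 -> t2 \in X.

Lemma G_closed_split_iedge (X : {set {set V}}) e : X \subset F -> G_closed X ->
  iedge F e -> edeg X e = 1 -> e \in S.
Proof.
move=> XF Xclosed ie X1; have [t1 [t2 [t1F t2F d12 I_e]]] := iedge_dual_adj F3 ie.
have [_ triangles] := dual_adj_iedge edeg12 t1F t2F d12; rewrite I_e in triangles.
apply/negPn/negP => eS.
have G12 : G_adj S t1 t2 by rewrite /G_adj d12 I_e eS.
have /card_gt0P [t0] : 0 < edeg X e by rewrite X1.
rewrite inE => /andP [t0X et0].
have t12X : t1 \in X /\ t2 \in X.
  have : t0 \in [set t1; t2] by rewrite -triangles inE (subsetP XF _ t0X) et0.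
  rewrite !inE => /orP [] /eqP t0_eq; subst t0; split=> //.
    exact: Xclosed t0X t2F G12.
  by apply: Xclosed t0X t1F _; rewrite G_adj_sym.
have : [set t1; t2] \subset [set t in X | e \subset t].
  apply/subsetP => t t12; move: (t12); rewrite -triangles !inE => /andP [_ ->].
  by case/set2P: t12 => ->; rewrite andbT; case: t12X.
by move/subset_leq_card; rewrite cards2 (andP d12).1 -/(edeg X e) X1.
Qed.

Lemma G_closed_no_split_iedge (X : {set {set V}}) e : X \subset F -> G_closed X ->
  iedge F e -> edeg X e != 1.
Proof.
move=> XF Xclosed ie; apply/eqP => X1.
set D := [set f in S | edeg X f == 1].
have DS : D \subset S by apply/subsetP => f /setIdP [].
have D_sub : {in D, forall f : {set V}, f \subset H_verts F b}.
  by move=> f /(subsetP DS) /S_sub.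
have D_acyclic : ~ has_cycle (H_verts F b) (eadj D).
  by move/(has_cycle_subrel (eadj_subset DS)).
have D_edge : exists x y, eadj D x y.
  have eD : e \in D by rewrite inE (G_closed_split_iedge XF Xclosed ie X1) X1 eqxx.
  have /andP [/setIdP [/cards2P [x [y [xy e_xy]]] _] _] := ie.
  by exists x, y; rewrite /eadj xy -e_xy eD.
have [z zb z_leaf] := forest_leaf D_sub D_acyclic b D_edge.
have iz : ivert F z.
  have /card_gt0P [u] : 0 < #|[set u | eadj D z u]| by rewrite z_leaf.
  rewrite inE => /andP [_ /D_sub /subsetP /(_ z (set21 _ _))].
  by rewrite /H_verts !inE (negbTE zb).
have z_nbhd : [set u | eadj D z u] = [set u | (u != z) && (edeg X [set z; u] == 1)].
  apply/setP => u; rewrite !inE /eadj eq_sym; apply: andb_id2l => uz.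
  rewrite inE; apply: andb_idl => /eqP zu1; apply: (G_closed_split_iedge XF Xclosed _ zu1).
  have /card_gt0P [t] : 0 < edeg X [set z; u] by rewrite zu1.
  rewrite inE => /andP [tX zut]; apply: iedge_of_ivert (set21 z u) iz => //.
  by apply: edge_in_triangle (subsetP XF _ tX) zut _; rewrite cards2 eq_sym uz.
by have := even_card_edeg1 F3 edeg12 z XF; rewrite -z_nbhd z_leaf.
Qed.

Hypothesis S_iedge : {in S, forall e, iedge F e}.
Hypothesis S_large : #|[set v | ivert F v]| <= #|S|.
Hypothesis euler : #|V| + #|F| = #|edges F| + 1.

Lemma card_G_edges : #|edge_set F (G_adj S)| <= #|F| - 1.
Proof.
have G_edges : edge_set F (G_adj S) \subset
    [set [set t in F | f \subset t] | f : {set V} in [set e | iedge F e] :\: S].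
  apply/subsetP => f /imset2P [t1 t2 t1F]; rewrite inE => /andP [t2F /andP [d12 nS]] ->.
  have [ie triangles] := dual_adj_iedge edeg12 t1F t2F d12.
  by apply/imsetP; exists (t1 :&: t2); rewrite ?inE ?ie ?nS ?triangles.
apply: leq_trans (subset_leq_card G_edges) _; apply: leq_trans (leq_imset_card _ _) _.
rewrite cardsD (setIidPr _); last by apply/subsetP => e /S_iedge; rewrite inE.
move: (card_iedge_le F3 edeg12 euler) S_large.
(* The two occurrences of [#|S|] are elaborated differently; [set] merges them for [lia]. *)
by set s := #|S|; lia.
Qed.

Hypothesis dual_connected : connectedb F (@dual_adj V).

Lemma G_connected : connectedb F (G_adj S).
Proof.
apply/forall_inP => x xF; apply/forall_inP => y yF.
set X := [set t in F | connect (restr F (G_adj S)) x t].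
have XF : X \subset F by apply/subsetP => t /setIdP [].
have Xclosed : G_closed X.
  move=> t1 t2 /setIdP [t1F xt1] t2F G12; rewrite inE t2F (connect_trans xt1) //.
  by apply: connect1; rewrite /restr t1F t2F G12.
have xX : x \in X by rewrite inE xF connect0.
suff : y \in X by case/setIdP.
clearbody X; apply/negPn/negP => yX.
have [t1 [t2 [t1X /setDP [t2F t2X] d12]]] :=
  connected_cut dual_connected XF xX (introT setDP (conj yF yX)).
have t1F := subsetP XF _ t1X.
have [ie triangles] := dual_adj_iedge edeg12 t1F t2F d12.
suff X1 : edeg X (t1 :&: t2) = 1 by have := G_closed_no_split_iedge XF Xclosed ie; rewrite X1.
rewrite /edeg -(cards1 t1); apply: eq_card => t; rewrite !inE.
apply/andP/eqP => [[tX It] | ->]; last by rewrite t1X subsetIl.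
have : t \in [set t in F | t1 :&: t2 \subset t] by rewrite inE (subsetP XF _ tX) It.
by rewrite triangles => /set2P [// | t_t2]; rewrite -t_t2 tX in t2X.
Qed.

End Spanning.

Lemma card_H_verts (V : finType) (F : {set {set V}}) b :
  bvert F b -> #|H_verts F b| = #|[set v | ivert F v]|.+1.
Proof. by move=> bb; rewrite cardsU1 inE /ivert bb. Qed.

Theorem theorem12 (V : finType) (F : {set {set V}})
    (b : V) (e0 : {set V}) (S : {set {set V}}) :
  triangulated_polygon F ->
  no_interior_crossing F ->
  bvert F b ->
  ((exists v, ivert F v) -> bridge_edge F e0 /\ b \in e0) ->
  S \subset H_edges F e0 ->
  is_tree (H_verts F b) (eadj S) ->
  is_tree F (G_adj S).
Proof.
move=> [F3 F_cover edeg12 _ [dual_conn _ euler]] _ bb he0 SH [_ H_conn H_acyclic].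
have {}F3 : {in F, forall t : {set V}, #|t| = 3} by move=> t /F3 /eqP.
have S_H e : e \in S -> iedge F e /\ e \subset H_verts F b.
  by move/(subsetP SH); apply: H_edges_iedge.
have S_large : #|[set v | ivert F v]| <= #|S|.
  have := connected_card_edge_set H_conn; rewrite card_H_verts // subn1 /=.
  by move/leq_trans; apply; apply/subset_leq_card/edge_set_eadj.
have G_conn := G_connected F3 edeg12 (fun e eS => (S_H e eS).2) H_acyclic dual_conn.
split=> //.
  by have [t tF _] := F_cover b; apply/set0Pn; exists t.
apply: connected_acyclic G_conn _.
exact: card_G_edges F3 edeg12 (fun e eS => (S_H e eS).1) S_large euler.
Qed.
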